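(* Let $n\ge 1$ and $m\ge 2$ be integers with $m\nmid n$, let $\ell=\lfloor n/m\rfloor$, let $k$ be an integer with $1\le k\le \ell$, let $s=\lfloor \ell/k\rfloor$, and let $f=\theta_{m,0}+\theta_{m,k}$. Then the order of $f$ under composition is $2^{\lceil\log_2\frac{\ell+1}{k}\rceil}$, and the compositional inverse of $f$ is $$f^{-1}=\theta_{m,0}+\theta_{m,k}+\theta_{m,2k}+\cdots+\theta_{m,sk}.$$ Moreover, the algebraic degree of $f$ is $(m-1)k+1$ and the algebraic degree of $f^{-1}$ is $(m-1)sk+1$.
   Context: For $x=(x_0,\dots,x_{n-1})\in\mathbb{F}_2^n$, indices of coordinates are taken modulo $n$. For a nonnegative integer $k$, the map $\theta_{m,k}\colon\mathbb{F}_2^n\to\mathbb{F}_2^n$ is defined by $\theta_{m,k}(x)=y$ with $y_i=x_{i+mk}\prod_{1\le j\le mk-1,\ m\nmid j}(x_{i+j}+1)$ for $i\in\{0,\dots,n-1\}$; $\theta_{m,0}$ is the identity map. Sums of maps are pointwise sums. The order of $f$ is the least $r\ge1$ with $f^{r}$ (the $r$-fold composition) equal to the identity. The algebraic degree of a map $\mathbb{F}_2^n\to\mathbb{F}_2^n$ is the maximum degree of the algebraic normal forms of its coordinate functions. *)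

(* Vectors of F_2^n are n.-tuples of booleans; F_2 = bool,
   addition = xorb (+), multiplication = andb. *)
From mathcomp Require Import all_boot.
Set Implicit Arguments. Unset Strict Implicit. Unset Printing Implicit Defensive.

Definition vec (n : nat) := n.-tuple bool.

Definition coord n (x : vec n) (j : nat) : bool := nth false x (j %% n).

(* theta_{m,k}(x)_i = x_{i+mk} * prod_{1<=j<=mk-1, m does not divide j} (x_{i+j}+1) *)
Definition theta n (m k : nat) (x : vec n) : vec n :=
  [tuple coord x (i + m * k) &&
         \big[andb/true]_(1 <= j < m * k | ~~ (m %| j)) ~~ coord x (i + j)
   | i < n].

Definition theta_sum n (m k s : nat) (x : vec n) : vec n :=
  [tuple \big[addb/false]_(t < s.+1) tnth (theta m (t * k) x) i | i < n].

Definition fmap n (m k : nat) (x : vec n) : vec n :=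
  [tuple tnth (theta m 0 x) i (+) tnth (theta m k x) i | i < n].

Definition has_order (T : Type) (f : T -> T) (r : nat) : Prop :=
  0 < r /\ iter r f =1 id /\ (forall r', 0 < r' < r -> ~ (iter r' f =1 id)).

(* ceiling of log_2 (a / b) for positive a, b : the least e with a/b <= 2^e,
   i.e. the least e with ceil(a/b) <= 2^e, which is up_log 2 (ceil(a/b)) *)
Definition ceil_div (a b : nat) : nat := (a + b - 1) %/ b.
Definition ceil_log2_ratio (a b : nat) : nat := up_log 2 (ceil_div a b).

(* Algebraic normal form: for g : F_2^n -> F_2, the ANF coefficient of the
   monomial prod_{i in S} x_i (Moebius transform), degree of the ANF, and
   the algebraic degree of a vectorial map (max over coordinate functions). *)
Definition indic n (T : {set 'I_n}) : vec n := [tuple (i \in T) | i < n].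
Definition anf_coef n (g : vec n -> bool) (S : {set 'I_n}) : bool :=
  \big[addb/false]_(T : {set 'I_n} | T \subset S) g (indic T).
Definition anf_degree n (g : vec n -> bool) : nat :=
  \max_(S : {set 'I_n} | anf_coef g S) #|S|.
Definition alg_degree n (F : vec n -> vec n) : nat :=
  \max_(i < n) anf_degree (fun x => tnth (F x) i).

From mathcomp Require Import all_boot zify.
Set Implicit Arguments. Unset Strict Implicit. Unset Printing Implicit Defensive.

(* Fix a position i and read x along the lattice i, i + m, i + 2m, ...  The
   largest L with theta_{m,L}(x)_i = 1 (the chain length at i) is at most
   n/m because m does not divide n.  The map f preserves chain lengths, and on
   the bits b_u = x_{i+mu}, u <= L, it acts as I + N^k, where N is the
   nilpotent shift b_u |-> b_{u+1}.  Over F_2, (I + N^k)^(2^j) = I + N^(k 2^j),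
   which is the identity on all chains iff k 2^j > n/m; and the telescoping
   sum of the N^(tk), t <= s, inverts I + N^k because N^((s+1)k) = 0.  For the
   degrees, the coordinate x_{i+mt} prod_j (x_{i+j} + 1) of theta_{m,t} has the
   monomials between x_{i+mt} and the full product as its algebraic normal
   form, and the full product for t = s survives in the sum. *)

(** * Orders of maps *)

Lemma iter_mul_id T (g : T -> T) a q : iter a g =1 id -> iter (q * a) g =1 id.
Proof. by move=> ga; elim: q => // q IH x; rewrite mulSn iterD IH ga. Qed.

Lemma iter_gcdn_id T (g : T -> T) a b :
  iter a g =1 id -> iter b g =1 id -> iter (gcdn a b) g =1 id.
Proof.
elim/ltn_ind: a b => a IH b ga gb; rewrite gcdnE; case: posnP => [// | a_gt0].
apply: IH => //; first by rewrite ltn_mod.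
by move=> x; have := gb x; rewrite {1}(divn_eq b a) iterD (iter_mul_id _ ga).
Qed.

Lemma has_order_pow2 T (g : T -> T) e :
  (forall j, iter (2 ^ j) g =1 id <-> e <= j) -> has_order g (2 ^ e).
Proof.
move=> g_id; split; first by rewrite expn_gt0.
split=> [|r /andP[r_gt0 r_lt] gr]; first exact/g_id.
have /(dvdn_pfactor _ _ (isT : prime 2))[w _ def_gcd] := dvdn_gcdr r (2 ^ e).
have := iter_gcdn_id gr ((g_id e).2 (leqnn e)); rewrite def_gcd => /g_id e_le_w.
have := dvdn_leq r_gt0 (dvdn_gcdl r (2 ^ e)); rewrite def_gcd => w_le_r.
by have := leq_trans (leq_pexp2l (isT : 0 < 2) e_le_w) w_le_r; rewrite leqNgt r_lt.
Qed.

Lemma up_log2_leq c j : (up_log 2 c <= j) = (c <= 2 ^ j).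
Proof.
apply/idP/idP => [/(leq_pexp2l (isT : 0 < 2)) | ]; last exact: up_log_min.
exact/leq_trans/up_logP.
Qed.

Lemma ceil_div_leq a b c : 0 < b -> (ceil_div a b <= c) = (a <= c * b).
Proof. by move=> b_gt0; rewrite /ceil_div -ltnS ltn_divLR // mulSn; lia. Qed.

Lemma ceil_log2_ratio_leq a b j :
  0 < b -> (ceil_log2_ratio a b <= j) = (a <= b * 2 ^ j).
Proof. by move=> b_gt0; rewrite /ceil_log2_ratio up_log2_leq ceil_div_leq // mulnC. Qed.

(* I + N^d on the bits b_0, ..., b_L, where N is the shift b_u |-> b_(u+1). *)
Definition addshift (d L : nat) (b : nat -> bool) (u : nat) : bool :=
  b u (+) ((u + d <= L) && b (u + d)).

Lemma addshift_pow2 d L b j u :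
  iter (2 ^ j) (addshift d L) b u = addshift (d * 2 ^ j) L b u.
Proof.
elim: j b u => [|j IH] b u; first by rewrite muln1.
rewrite expnS mul2n -addnn iterD !IH /addshift !IH /addshift mulnDr -addnA.
set D := d * 2 ^ j; case: (leqP (u + D) L) => [uD | Du] /=.
  by rewrite addbA -[_ (+) b (u + D)]addbA addbb addbF addnA.
by rewrite !addbF; case: leqP => //; lia.
Qed.

Lemma big_addb_telescope (c : nat -> bool) s :
  \big[addb/false]_(t < s) (c t (+) c t.+1) = c 0 (+) c s.
Proof.
rewrite -(big_mkord xpredT (fun t => c t (+) c t.+1)).
rewrite (telescope_big (op := addb) (fun i j => c i (+) c j)) => [|j _].
  by case: s => [|s]; rewrite ?addbb.
by rewrite /= addbA addbK.
Qed.

Lemma big_addb_odd_card (X : finType) (P Q : pred X) :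
  \big[addb/false]_(x | P x) Q x = odd #|[pred x | P x && Q x]|.
Proof.
rewrite (bigID Q) /= [X in _ (+) X]big1 ?addbF => [|x /andP[_ /negbTE]] //.
rewrite (eq_bigr (fun _ => true)) => [|x /andP[_ ->]] //.
by rewrite big_const; elim: #|_| => //= c ->.
Qed.

Lemma odd_card_interval (X : finType) (A U : {set X}) :
  odd #|[set T : {set X} | A \subset T & T \subset U]| = (A == U).
Proof.
have [AU | /negbTE nAU] := boolP (A \subset U); last first.
  rewrite (_ : [set T | _ & _] = set0) ?cards0; last first.
    apply/setP => T; rewrite !inE; apply/negbTE/andP => -[AT].
    by move/(subset_trans AT); rewrite nAU.
  by apply/esym/negbTE; apply: contraFN nAU => /eqP ->.
have -> : [set T : {set X} | A \subset T & T \subset U] =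
    [set A :|: C | C in powerset (U :\: A)].
  apply/setP => T; rewrite inE; apply/andP/imsetP => [[AT TU] | [C]].
    exists (T :\: A); first by rewrite inE setSD.
    by rewrite -{1}(setID T A) (setIidPr AT).
  by rewrite inE => CUA ->; rewrite subsetUl subUset AU (subset_trans CUA) ?subsetDl.
rewrite card_in_imset => [|C1 C2]; last first.
  rewrite !inE !subsetD => /andP[_ C1A] /andP[_ C2A] /(congr1 (fun C => C :\: A)).
  by rewrite !setDUl setDv !set0U (setDidPl C1A) (setDidPl C2A).
by rewrite card_powerset oddX orbF cards_eq0 setD_eq0 eqEsubset AU.
Qed.

Lemma card_nondvd m t : 0 < m ->
  #|[set j : 'I_(m * t) | (0 < j) && ~~ (m %| j)]| = (m - 1) * t.
Proof.
move=> m_gt0; rewrite -sum1_card (eq_bigl (fun j : 'I_(m * t) => (0 < j) && ~~ (m %| j))).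
  rewrite -(big_mkord (fun j => (0 < j) && ~~ (m %| j)) (fun=> 1)).
  elim: t => [|t IH]; first by rewrite !muln0 big_geq.
  rewrite mulnSr (big_cat_nat _ (leq_addr m (m * t))) //= IH.
  rewrite big_ltn_cond; last lia.
  rewrite dvdn_mulr // andbF big_nat_cond.
  rewrite (eq_bigl (fun j => (m * t < j < m * t + m) && true)) => [|j].
    by rewrite -big_nat_cond sum_nat_const_nat; nia.
  rewrite andbT; case/boolP: (m * t < j < m * t + m) => //= /andP[tj jt].
  rewrite (leq_ltn_trans (leq0n _) tj) -(subnKC (ltnW tj)) dvdn_addr ?dvdn_mulr //.
  by apply/negP => /dvdn_leq; rewrite subn_gt0 => /(_ tj); lia.
by move=> j; rewrite inE.
Qed.

(** * Algebraic normal forms *)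

Lemma anf_coef_big_addb n s (g : 'I_s -> vec n -> bool) S :
  anf_coef (fun x => \big[addb/false]_(t < s) g t x) S =
  \big[addb/false]_(t < s) anf_coef (g t) S.
Proof. by rewrite /anf_coef exchange_big. Qed.

Lemma eq_anf_degree n (g1 g2 : vec n -> bool) : g1 =1 g2 -> anf_degree g1 = anf_degree g2.
Proof.
move=> eq_g; apply: eq_bigl => S; rewrite /anf_coef.
by apply: eq_bigr => T _; rewrite eq_g.
Qed.

Lemma eq_alg_degree n (F G : vec n -> vec n) : F =1 G -> alg_degree F = alg_degree G.
Proof.
by move=> eq_FG; apply: eq_bigr => i _; apply: eq_anf_degree => x; rewrite eq_FG.
Qed.

(** * Chains *)

Section Chains.
Variables n m : nat.
Hypotheses (n_gt0 : 0 < n) (m_gt1 : 1 < m) (m_ndvd_n : ~~ (m %| n)).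
Implicit Types (x y : vec n) (i j p t u w L : nat).

Definition ordn p : 'I_n := Ordinal (ltn_pmod p n_gt0).

Lemma eq_ordn p q : (ordn p == ordn q) = (p == q %[mod n]).
Proof. by []. Qed.

Lemma coord_ordn y p : coord y p = tnth y (ordn p).
Proof. by rewrite /coord (tnth_nth false). Qed.

Lemma coordE y (i : 'I_n) : coord y i = tnth y i.
Proof. by rewrite /coord modn_small // (tnth_nth false). Qed.

Lemma coordDn y p : coord y (p + n) = coord y p.
Proof. by rewrite /coord modnDr. Qed.

Lemma coord_indic (T : {set 'I_n}) p : coord (indic T) p = (ordn p \in T).
Proof. by rewrite coord_ordn tnth_mktuple. Qed.

Definition gapfree x i u :=
  \big[andb/true]_(1 <= j < m * u | ~~ (m %| j)) ~~ coord x (i + j).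

Definition theta_bit x i u := coord x (i + m * u) && gapfree x i u.

Lemma gapfreeP x i u :
  reflect (forall j, 0 < j < m * u -> ~~ (m %| j) -> coord x (i + j) = false)
          (gapfree x i u).
Proof.
rewrite /gapfree big_all_cond; apply: (iffP allP) => [gf j ju mj | gf j].
  by apply/negbTE; have := gf j; rewrite mem_index_iota ju /= mj => /(_ isT).
by rewrite mem_index_iota => /gf{}gf; apply/implyP => /gf ->.
Qed.

Lemma gapfree0 x i : gapfree x i 0.
Proof. by rewrite /gapfree muln0 big_geq. Qed.

Lemma ndvd_addr_mul j a : ~~ (m %| j) -> ~~ (m %| j + m * a).
Proof. by rewrite dvdn_addl ?dvdn_mulr. Qed.

Lemma ndvd_neq_mul j a : ~~ (m %| j) -> j != m * a.
Proof. by apply: contra => /eqP ->; rewrite dvdn_mulr. Qed.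

Lemma gapfreeD x i a b : gapfree x i (a + b) = gapfree x i a && gapfree x (i + m * a) b.
Proof.
apply/gapfreeP/andP => [gf | [/gapfreeP gfa /gapfreeP gfb] j /andP[j_gt0 jab] mj].
  split; apply/gapfreeP => j /andP[j_gt0 jlt] mj.
    by apply: gf; rewrite // j_gt0 (leq_trans jlt) // leq_mul2l leq_addr orbT.
  rewrite -addnA; apply: gf; first by rewrite mulnDr ltn_add2l jlt; lia.
  by rewrite addnC ndvd_addr_mul.
case: (ltngtP j (m * a)) => [ja | aj | ja]; first by apply: gfa; rewrite ?j_gt0.
  rewrite -(subnKC (ltnW aj)) addnA; apply: gfb.
    by rewrite subn_gt0 aj /=; rewrite mulnDr in jab; lia.
  by rewrite -(dvdn_addr _ (dvdn_mulr a (dvdnn m))) subnKC // ltnW.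
by move: mj; rewrite ja dvdn_mulr.
Qed.

Lemma gapfree_le x i u v : v <= u -> gapfree x i u -> gapfree x i v.
Proof. by move=> vu; rewrite -(subnKC vu) gapfreeD => /andP[]. Qed.

Lemma theta_bit_cat x i a b :
  gapfree x i a -> theta_bit x (i + m * a) b -> theta_bit x i (a + b).
Proof. by rewrite /theta_bit gapfreeD mulnDr addnA => -> /andP[-> ->]. Qed.

Lemma theta_bit_bound x i u : theta_bit x i u -> m * u < n.
Proof.
case/andP=> x_end /gapfreeP gf; rewrite ltnNge; apply/negP => nu.
have n_lt : n < m * u by rewrite ltn_neqAle nu andbT ndvd_neq_mul.
have := gf (m * u - n); rewrite subn_gt0 n_lt ltn_subrL n_gt0 (ltn_trans n_gt0) //.
rewrite dvdn_subr ?(ltnW n_lt) ?dvdn_mulr // m_ndvd_n => /(_ isT isT).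
by rewrite -coordDn -addnA subnK ?(ltnW n_lt) ?x_end.
Qed.

(* The disjunct [L == 0] also covers the positions at which no theta_bit holds. *)
Definition chain x i L :=
  [/\ gapfree x i L, (L == 0) || coord x (i + m * L)
    & forall w, 0 < w -> theta_bit x (i + m * L) w = false].

Lemma chain_exists x i : exists L, chain x i L.
Proof.
pose P u := (u == 0) || theta_bit x i u.
have P_bound u : P u -> u <= n.
  case/orP=> [/eqP -> // | /theta_bit_bound/ltnW mu_le]; apply: leq_trans mu_le.
  by rewrite leq_pmull ?(ltnW m_gt1).
have [L PL L_max] := ex_maxnP (ex_intro P 0 erefl) P_bound.
have gfL : gapfree x i L by case/orP: PL => [/eqP -> | /andP[]//]; apply: gapfree0.
exists L; split=> // [| w w_gt0].
  by case/orP: PL => [-> | /andP[->]] //; rewrite orbT.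
apply/negbTE/negP => /(theta_bit_cat gfL) tb.
by have := L_max (L + w); rewrite /P tb orbT => /(_ isT); lia.
Qed.

Lemma chain_theta_bit x i L t :
  chain x i L -> theta_bit x i t = (t <= L) && coord x (i + m * t).
Proof.
case=> gfL _ no_ext; case: (leqP t L) => [tL | Lt] /=.
  by rewrite /theta_bit (gapfree_le tL gfL) andbT.
apply/negbTE/negP; rewrite /theta_bit -(subnKC (ltnW Lt)) gapfreeD mulnDr addnA.
case/andP=> x_end /andP[_ gf]; have := no_ext (t - L); rewrite subn_gt0 Lt => /(_ isT).
by rewrite /theta_bit x_end gf.
Qed.

Lemma chain_drop x i L u : chain x i L -> u <= L -> chain x (i + m * u) (L - u).
Proof.
move=> [gfL endL no_ext] uL.
have shift : i + m * u + m * (L - u) = i + m * L by rewrite -addnA -mulnDr subnKC.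
split; rewrite ?shift //; first by move: gfL; rewrite -{1}(subnKC uL) gapfreeD => /andP[].
by case/orP: endL => [/eqP -> | ->]; rewrite ?orbT.
Qed.

Lemma chain_bound x i L : chain x i L -> L <= n %/ m.
Proof.
move=> ch; have [-> // | L_gt0] := posnP L.
have /theta_bit_bound : theta_bit x i L.
  rewrite (chain_theta_bit _ ch) leqnn.
  by case: ch => _ /orP[/eqP L0|] //; rewrite L0 in L_gt0.
by move=> mL; rewrite leq_divRL; lia.
Qed.

Lemma leq_div_ltn_mul L : L <= n %/ m -> m * L < n.
Proof.
move=> Ll; rewrite ltn_neqAle eq_sym ndvd_neq_mul //.
by rewrite mulnC -leq_divRL // ltnW.
Qed.

Lemma indic_chain L : 0 < L -> L <= n %/ m -> chain (indic [set ordn (m * L)]) 0 L.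
Proof.
move=> L_gt0 /leq_div_ltn_mul mL.
split=> [| | w w_gt0].
- apply/gapfreeP => j /andP[_ jL] _.
  by rewrite coord_indic in_set1 eq_ordn add0n !modn_small ?ltn_eqF // (ltn_trans jL).
- by rewrite coord_indic in_set1 add0n eqxx orbT.
apply/negbTE/negP => tb; have mw := theta_bit_bound tb; case/andP: tb => + _.
rewrite coord_indic in_set1 eq_ordn add0n -{2}(addn0 (m * L)) eqn_modDl mod0n.
by rewrite modn_small // muln_eq0; lia.
Qed.

Lemma theta_bit0 x p : theta_bit x p 0 = coord x p.
Proof. by rewrite /theta_bit gapfree0 muln0 addn0 andbT. Qed.

Lemma coord_theta u x p : coord (theta m u x) p = theta_bit x p u.
Proof.
rewrite coord_ordn tnth_mktuple /theta_bit /gapfree /coord /= modnDml; congr andb.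
by apply: eq_bigr => j _; rewrite modnDml.
Qed.

Section Dynamics.
Variable k : nat.
Hypothesis k_gt0 : 0 < k.
Local Notation f := (@fmap n m k).

Lemma coord_fmap x p : coord (f x) p = coord x p (+) theta_bit x p k.
Proof. by rewrite coord_ordn tnth_mktuple -!coord_ordn !coord_theta theta_bit0. Qed.

Lemma coord_theta_sum s x p :
  coord (theta_sum m k s x) p = \big[addb/false]_(t < s.+1) theta_bit x p (t * k).
Proof.
by rewrite coord_ordn tnth_mktuple; apply: eq_bigr => t _; rewrite -coord_ordn coord_theta.
Qed.

Lemma theta_bit_skip x p j u :
  ~~ (m %| j) -> j < m * u < j + m * k -> theta_bit x (p + j) k ->
  coord x (p + m * u) = false.
Proof.
move=> mj /andP[ju uj] /andP[_ /gapfreeP gf].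
have := gf (m * u - j); rewrite -addnA subnKC ?(ltnW ju) //; apply; first lia.
by rewrite dvdn_subr ?(ltnW ju) // dvdn_mulr.
Qed.

Lemma gapfree_fmap x p w : theta_bit (f x) p w -> gapfree x p w.
Proof.
case/andP=> fx_end /gapfreeP fx_gapfree; apply/gapfreeP => j0 j0_bnd mj0.
apply/negbTE/negP => xj0.
(* Let p + j be the last off-lattice 1 of x below p + m w.  As (f x)_(p+j) = 0,
   theta_bit x (p + j) k holds; its 1 at p + j + m k is either a later
   off-lattice 1, or lies beyond p + m w and violates theta_bit x (p + m w) k. *)
pose P j := [&& 0 < j < m * w, ~~ (m %| j) & coord x (p + j)].
have P_bound j : P j -> j <= m * w by case/and3P=> /andP[_ /ltnW].
have P_j0 : P j0 by rewrite /P j0_bnd mj0 xj0.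
have [j /and3P[j_bnd mj xj] j_max] := ex_maxnP (ex_intro P j0 P_j0) P_bound.
have /andP[j_gt0 jw] := j_bnd.
have tb : theta_bit x (p + j) k.
  by move: (fx_gapfree j j_bnd mj); rewrite coord_fmap xj; case: theta_bit.
have x_jk : coord x (p + (j + m * k)) by rewrite addnA; case/andP: tb.
have := ndvd_neq_mul w (ndvd_addr_mul k mj); rewrite neq_ltn => /orP[jk_lt | jk_gt].
  have mk_gt0 : 0 < m * k by rewrite muln_gt0 k_gt0 ltnW.
  have := j_max (j + m * k); rewrite /P x_jk ndvd_addr_mul // jk_lt addn_gt0 j_gt0.
  by move=> /(_ isT); lia.
have x_end : coord x (p + m * w) = false by apply: theta_bit_skip mj _ tb; rewrite jw.
have /andP[_ /gapfreeP gf] : theta_bit x (p + m * w) k.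
  by move: fx_end; rewrite coord_fmap x_end.
suff : coord x (p + m * w + (j + m * k - m * w)) = false.
  by rewrite -addnA subnKC ?(ltnW jk_gt) // x_jk.
apply: gf; first lia.
by rewrite dvdn_subl ?(ltnW jk_gt) ?dvdn_mulr // ndvd_addr_mul.
Qed.

Lemma fmap_no_ext x p :
  (forall w, 0 < w -> theta_bit x p w = false) ->
  forall w, 0 < w -> theta_bit (f x) p w = false.
Proof.
move=> no_ext w w_gt0; apply/negbTE/negP => tb; have x_gapfree := gapfree_fmap tb.
move: tb => /andP[+ _]; rewrite coord_fmap; case x_end: (coord x (p + m * w)) => /= tb.
  by have := no_ext w w_gt0; rewrite /theta_bit x_end x_gapfree.
by have := no_ext (w + k); rewrite (theta_bit_cat x_gapfree tb) addn_gt0 w_gt0 => /(_ isT).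
Qed.

Lemma chain_fmap x i L : chain x i L -> chain (f x) i L.
Proof.
move=> [/gapfreeP gfL endL no_ext]; split; last exact: fmap_no_ext.
  apply/gapfreeP => j j_bnd mj; rewrite coord_fmap gfL //=.
  apply/negbTE/negP => tb; have /andP[j_gt0 jL] := j_bnd.
  have := ndvd_neq_mul L (ndvd_addr_mul k mj); rewrite neq_ltn => /orP[jk_lt | jk_gt].
    by case/andP: tb; rewrite -addnA gfL ?ndvd_addr_mul // jk_lt addn_gt0 j_gt0.
  move: endL; rewrite (theta_bit_skip mj _ tb) ?jL // orbF => /eqP L0.
  by rewrite L0 muln0 in jL.
by rewrite coord_fmap no_ext // addbF.
Qed.

Lemma coord_fmap_chain x i L u : chain x i L -> u <= L ->
  coord (f x) (i + m * u) = addshift k L (fun v => coord x (i + m * v)) u.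
Proof.
move=> ch uL; rewrite coord_fmap (chain_theta_bit _ (chain_drop ch uL)).
by rewrite /addshift mulnDr addnA leq_subRL.
Qed.

Lemma chain_iter_fmap x i L r : chain x i L -> chain (iter r f x) i L.
Proof. by move=> ch; elim: r => //= r; apply: chain_fmap. Qed.

Lemma coord_iter_fmap_chain x i L r u : chain x i L -> u <= L ->
  coord (iter r f x) (i + m * u) = iter r (addshift k L) (fun v => coord x (i + m * v)) u.
Proof.
move=> ch; elim: r u => // r IH u uL.
rewrite iterS (coord_fmap_chain (chain_iter_fmap r ch) uL) /= /addshift IH //.
by case: leqP => //= ukL; rewrite IH.
Qed.

Lemma iter_fmap_pow2_id e : iter (2 ^ e) f =1 id <-> n %/ m < k * 2 ^ e.
Proof.
split=> [f_id | lK x]; last first.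
  apply: eq_from_tnth => i; rewrite -!coordE; have [L ch] := chain_exists x i.
  have := coord_iter_fmap_chain (2 ^ e) ch (leq0n L).
  rewrite muln0 addn0 addshift_pow2 /addshift add0n => ->.
  by rewrite muln0 addn0 leqNgt (leq_ltn_trans (chain_bound ch) lK) addbF.
(* On the chain of length K = k 2^e carried by a unit vector, f^(2^e) = I + N^K
   adds the top bit to the bottom one. *)
rewrite ltnNge; apply/negP => Kl; pose K := k * 2 ^ e.
have K_gt0 : 0 < K by rewrite muln_gt0 k_gt0 expn_gt0.
have ch := indic_chain K_gt0 Kl.
have := coord_iter_fmap_chain (2 ^ e) ch (leq0n K).
rewrite f_id addshift_pow2 /addshift add0n -/K leqnn muln0 /= !coord_indic !in_set1.
by rewrite !add0n eqxx addbT; case: (_ == _).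
Qed.

Lemma fmapK : cancel f (theta_sum m k (n %/ m %/ k)).
Proof.
move=> x; apply: eq_from_tnth => i; rewrite -!coordE coord_theta_sum.
have [L ch] := chain_exists x i.
pose c t := (t * k <= L) && coord x (i + m * (t * k)).
under eq_bigr => t _ do rewrite (chain_theta_bit _ (chain_fmap ch)).
have step t : (t * k <= L) && coord (f x) (i + m * (t * k)) = c t (+) c t.+1.
  rewrite /c mulSnr; case: (leqP (t * k) L) => tkL /=.
    by rewrite (coord_fmap_chain ch tkL).
  by rewrite leqNgt (ltn_addr _ tkL).
under eq_bigr => t _ do rewrite step.
rewrite big_addb_telescope /c mul0n muln0 addn0 /=.
by rewrite leqNgt (leq_ltn_trans (chain_bound ch)) ?addbF // ltn_ceil.
Qed.

End Dynamics.

Section ThetaBitANF.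
Variable i : nat.

Definition tip t := ordn (i + m * t).
Definition gaps t :=
  [set ordn (i + j) | j : 'I_(m * t) in [set j : 'I_(m * t) | (0 < j) && ~~ (m %| j)]].
Definition window t := tip t |: gaps t.

Lemma ordnD_inj a b c : b < n -> c < n -> ordn (a + b) = ordn (a + c) -> b = c.
Proof.
by move=> bn cn /eqP; rewrite eq_ordn eqn_modDl !modn_small // => /eqP.
Qed.

Lemma theta_bit_indic T t :
  theta_bit (indic T) i t = (tip t \in T) && [disjoint gaps t & T].
Proof.
rewrite /theta_bit coord_indic; congr andb; rewrite disjoint_subset.
apply/gapfreeP/subsetP => [gf y /imsetP[j] | gT j jt mj].
  by rewrite inE => /andP[j_gt0 mj] ->; rewrite inE -coord_indic gf ?j_gt0 ?ltn_ord.
have /andP[_ jlt] := jt; rewrite coord_indic; apply/negbTE/gT/imsetP.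
by exists (Ordinal jlt); rewrite // inE mj andbT; case/andP: jt.
Qed.

Lemma anf_coef_theta_bit t S :
  anf_coef (fun x => theta_bit x i t) S = (S :\: gaps t == [set tip t]).
Proof.
rewrite /anf_coef; under eq_bigr do rewrite theta_bit_indic.
rewrite big_addb_odd_card eq_sym -odd_card_interval; congr odd; apply: eq_card => T.
rewrite !inE sub1set subsetD disjoint_sym.
by case: (tip t \in T); case: (T \subset S).
Qed.

Lemma tip_notin_gaps t : m * t < n -> tip t \notin gaps t.
Proof.
move=> mt; apply/imsetP => -[j _ /ordnD_inj eq_j].
by have := ltn_ord j; rewrite -eq_j ?ltnn // (ltn_trans (ltn_ord j)).
Qed.

Lemma card_window t : m * t < n -> #|window t| = (m - 1) * t + 1.
Proof.
move=> mt; rewrite cardsU1 tip_notin_gaps // addnC card_in_imset => [|j1 j2 _ _].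
  by rewrite card_nondvd // ltnW.
by move/ordnD_inj => eq_j; apply: val_inj; apply: eq_j; apply: ltn_trans mt.
Qed.

Lemma anf_coef_theta_bit_sub t S :
  anf_coef (fun x => theta_bit x i t) S -> S \subset window t.
Proof.
rewrite anf_coef_theta_bit => /eqP gapsS; apply/subsetP => y yS.
rewrite /window in_setU1; apply/orP.
have [yg | yg] := boolP (y \in gaps t); [by right | left].
have : y \in S :\: gaps t by rewrite inE yg yS.
by rewrite gapsS in_set1.
Qed.

Lemma anf_coef_theta_bit_window t :
  m * t < n -> anf_coef (fun x => theta_bit x i t) (window t).
Proof.
move=> mt; rewrite anf_coef_theta_bit; apply/eqP/setP => y; rewrite !inE.
case: eqP => [-> | _] /=; [by rewrite (negbTE (tip_notin_gaps mt)) | exact: andNb].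
Qed.

Lemma anf_degree_theta_sum k s : 0 < k -> m * (s * k) < n ->
  anf_degree (fun x => \big[addb/false]_(t < s.+1) theta_bit x i (t * k)) =
  (m - 1) * (s * k) + 1.
Proof.
move=> k_gt0 msk.
have mtk t : t <= s -> m * (t * k) < n.
  by move=> ts; apply: leq_ltn_trans msk; rewrite leq_mul2l leq_mul2r ts !orbT.
apply/eqP; rewrite eqn_leq; apply/andP; split.
  apply/bigmax_leqP => S; rewrite anf_coef_big_addb => cS.
  have [t /anf_coef_theta_bit_sub/subset_leq_card] :
      exists t : 'I_s.+1, anf_coef (fun x => theta_bit x i (t * k)) S.
    apply/existsP; apply: contraLR cS => /existsPn nz.
    by rewrite big1 // => t _; apply/negbTE/nz.
  rewrite (card_window (mtk t (ltn_ord t))) => /leq_trans; apply.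
  by rewrite leq_add2r leq_mul2l leq_mul2r -ltnS ltn_ord !orbT.
have c_top : anf_coef (fun x => \big[addb/false]_(t < s.+1) theta_bit x i (t * k))
                     (window (s * k)).
  rewrite anf_coef_big_addb big_ord_recr /= anf_coef_theta_bit_window // big1 // => t _.
  apply/negbTE/negP => /anf_coef_theta_bit_sub/subset_leq_card.
  rewrite !card_window ?mtk ?(ltnW (ltn_ord t)) // leq_add2r leqNgt.
  by rewrite ltn_pmul2l ?subn_gt0 // ltn_pmul2r // ltn_ord.
by rewrite -(card_window msk); apply: leq_bigmax_cond.
Qed.

End ThetaBitANF.

Lemma alg_degree_theta_sum k s : 0 < k -> m * (s * k) < n ->
  alg_degree (@theta_sum n m k s) = (m - 1) * (s * k) + 1.
Proof.
move=> k_gt0 msk; rewrite /alg_degree.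
have := @eq_bigmax _ (fun i : 'I_n => anf_degree (fun x => tnth (theta_sum m k s x) i)).
rewrite card_ord => /(_ n_gt0)[i0 ->].
rewrite -(anf_degree_theta_sum i0 k_gt0 msk); apply: eq_anf_degree => x.
by rewrite -coordE coord_theta_sum.
Qed.

Lemma fmap_theta_sum k : @fmap n m k =1 theta_sum m k 1.
Proof.
move=> x; apply: eq_from_tnth => i; rewrite -!coordE coord_fmap coord_theta_sum.
by rewrite !big_ord_recr big_ord0 /= mul0n mul1n theta_bit0.
Qed.

End Chains.

Theorem theorem3 (n m k : nat) :
  1 <= n -> 2 <= m -> ~~ (m %| n) ->
  1 <= k <= n %/ m ->
  let l := n %/ m in
  let s := l %/ k in
  let f := @fmap n m k in
  let finv := @theta_sum n m k s in
  has_order f (2 ^ ceil_log2_ratio l.+1 k) /\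
  cancel f finv /\ cancel finv f /\
  alg_degree f = (m - 1) * k + 1 /\
  alg_degree finv = (m - 1) * s * k + 1.
Proof.
move=> n_gt0 m_gt1 m_ndvd_n /andP[k_gt0 k_le] l s f finv.
have fK : cancel f finv := fmapK n_gt0 m_gt1 m_ndvd_n k_gt0.
have mk : m * (1 * k) < n by rewrite mul1n leq_div_ltn_mul.
have msk : m * (s * k) < n by rewrite leq_div_ltn_mul // leq_divM.
split.
  apply: has_order_pow2 => j; rewrite ceil_log2_ratio_leq //.
  exact: iter_fmap_pow2_id.
split; first exact: fK.
split; first exact: canF_sym fK.
split; last by rewrite -mulnA alg_degree_theta_sum.
rewrite (eq_alg_degree (fmap_theta_sum m n_gt0 k)).
by rewrite (alg_degree_theta_sum n_gt0 m_gt1 k_gt0 mk) mul1n.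
Qed.
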